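(* For every nice graph $G$ with maximum degree at most $4$, $\chi'_{qm\Sigma}(G)\le 7$.
   Context: All graphs are simple and finite. A $k$-edge-coloring of $G$ is any map $c:E(G)\to\{1,\dots,k\}$ (adjacent edges may share colors). It induces $\sigma_c(v)=\sum_{u\in N(v)}c(vu)$. The coloring is neighbor sum distinguishing (NSD) if $\sigma_c(u)\ne\sigma_c(v)$ for every edge $uv$. It is quasi-majority if every vertex $v$ is incident to at most $\lceil d(v)/2\rceil$ edges of each single color. $\chi'_{qm\Sigma}(G)$ denotes the least $k$ such that $G$ has a $k$-edge-coloring that is both quasi-majority and NSD. A graph is nice if it has no connected component isomorphic to $K_2$. *)

From mathcomp Require Import all_boot.
Set Implicit Arguments. Unset Strict Implicit. Unset Printing Implicit Defensive.

Definition simple_graph (T : finType) (e : rel T) : Prop :=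
  symmetric e /\ irreflexive e.

Definition nbhd (T : finType) (e : rel T) (v : T) : {set T} := [set u | e v u].
Definition deg (T : finType) (e : rel T) (v : T) : nat := #|nbhd e v|.

(* An edge coloring is given as c : T -> T -> nat, where c u v is the color of
   the edge uv (only meaningful when e u v); it must be symmetric on edges. *)
Definition is_k_edge_coloring (T : finType) (e : rel T) (k : nat)
    (c : T -> T -> nat) : Prop :=
  forall u v, e u v -> c u v = c v u /\ 1 <= c u v <= k.

Definition sigma_c (T : finType) (e : rel T) (c : T -> T -> nat) (v : T) : nat :=
  \sum_(u in nbhd e v) c v u.

Definition nsd (T : finType) (e : rel T) (c : T -> T -> nat) : Prop :=
  forall u v, e u v -> sigma_c e c u <> sigma_c e c v.

Definition quasi_majority (T : finType) (e : rel T) (c : T -> T -> nat) : Prop :=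
  forall (v : T) (i : nat), #|[set u | e v u & c v u == i]| <= uphalf (deg e v).

Definition qm_nsd_colorable (T : finType) (e : rel T) (k : nat) : Prop :=
  exists c : T -> T -> nat,
    [/\ is_k_edge_coloring e k c, quasi_majority e c & nsd e c].

(* chi'_{qm Sigma}(G) <= k  iff  G admits a qm-NSD k-edge-coloring
   (monotone in k, since a k-coloring is also a k'-coloring for k <= k'). *)

(* nice: no connected component isomorphic to K2, i.e. no edge uv with both
   endpoints of degree 1. *)
Definition nice (T : finType) (e : rel T) : Prop :=
  forall u v, e u v -> ~ (deg e u = 1 /\ deg e v = 1).

Definition max_degree_le (T : finType) (e : rel T) (D : nat) : Prop :=
  forall v, deg e v <= D.

From mathcomp Require Import all_boot all_algebra.
From mathcomp Require Import ring lra zify.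
Set Implicit Arguments. Unset Strict Implicit. Unset Printing Implicit Defensive.
Import GRing.Theory Num.Theory.

(* Delete the edges at a vertex v of degree d, 1 <= d <= 4,
   colour the rest by induction, and recolour the d edges at v; the sums need only differ on
   edges that are not isolated K2's, which the deletion may create.  The colour of vu must
   avoid 0, the colour already used ceil(d(u)/2) times at u, and the values that would equal
   the sums at u and at a neighbour of u outside N[v]; if u has k neighbours in N(v), at least
   7 - d(u) + k >= 3 + k colours remain.  The remaining conditions (different sums along the
   edges inside N(v) and between v and its neighbours, and two pairs of edges at v with
   different colours, which gives the quasi-majority condition at v) say that a product of
   affine forms does not vanish.  By the Combinatorial Nullstellensatz this can be achieved
   from the lists once some monomial with exponents at most 2 + k has a nonzero coefficient,
   which is checked by computation for every graph on at most 4 vertices.  The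
   Nullstellensatz is proved in its quantitative form, by Lagrange interpolation. *)

(** * The Combinatorial Nullstellensatz *)

Section LagrangeInterpolation.
Local Open Scope ring_scope.
Variables (F : fieldType) (I : finType) (x : I -> F).
Hypothesis x_inj : injective x.

Definition lagrange_weight (S : {set I}) (j : I) : F :=
  (\prod_(k in S :\ j) (x j - x k))^-1.

Lemma size_prod_XsubC_set (A : {set I}) :
  size (\prod_(k in A) ('X - (x k)%:P)) = #|A|.+1.
Proof. by rewrite -big_enum size_prod_XsubC cardE. Qed.

Lemma cardsD1_succ (S : {set I}) j n : #|S| = n.+1 -> j \in S -> #|S :\ j| = n.
Proof. by move=> hS jS; move: (cardsD1 j S); rewrite jS hS add1n => -[]. Qed.

(* The interpolant of [x ^+ m] on [S] is [x ^+ m] itself; compare leading coefficients. *)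
Lemma sum_lagrange_weight_expr (S : {set I}) n m : #|S| = n.+1 -> (m <= n)%N ->
  \sum_(j in S) lagrange_weight S j * x j ^+ m = (m == n)%:R.
Proof.
move=> cardS le_mn.
pose P := \sum_(j in S) (lagrange_weight S j * x j ^+ m) *:
   \prod_(k in S :\ j) ('X - (x k)%:P).
have P_interp k : k \in S -> P.[x k] = x k ^+ m.
  move=> kS; rewrite horner_sum (bigD1 k) //= [X in _ + X]big1 ?addr0 => [|j /andP[jS jk]].
    rewrite hornerZ horner_prod.
    under eq_bigr do rewrite hornerXsubC.
    rewrite /lagrange_weight mulrAC mulVf ?mul1r //.
    apply/prodf_neq0 => j; rewrite in_setD1 => /andP[jk _].
    by rewrite subr_eq0 (inj_eq x_inj) eq_sym.
  rewrite hornerZ horner_prod (bigD1 k) /=; last by rewrite in_setD1 eq_sym jk.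
  by rewrite hornerXsubC subrr mul0r mulr0.
have size_P : (size P <= n.+1)%N.
  apply: (leq_trans (size_sum _ _ _)); apply/bigmax_leqP => j jS.
  by apply: (leq_trans (size_scale_leq _ _)); rewrite size_prod_XsubC_set (cardsD1_succ cardS jS).
have P_eq : P = 'X^m.
  apply/eqP; rewrite -subr_eq0; apply/eqP.
  apply: (@roots_geq_poly_eq0 _ (P - 'X^m) [seq x k | k <- enum S]).
  - apply/allP => _ /mapP[k + ->]; rewrite mem_enum => kS.
    by rewrite /root hornerD hornerN P_interp // hornerXn subrr.
  - by rewrite map_inj_uniq ?enum_uniq.
  - rewrite size_map -cardE cardS; apply: (leq_trans (size_polyD _ _)).
    by rewrite size_polyN size_polyXn geq_max size_P ltnS.
have := congr1 (fun p : {poly F} => p`_n) P_eq.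
rewrite coef_sum coefXn eq_sym => <-; apply: eq_bigr => j jS.
have := lead_coef_prod_XsubC (index_enum I) (mem (S :\ j)) x.
rewrite lead_coefE size_prod_XsubC_set (cardsD1_succ cardS jS) => lead1.
by rewrite coefZ lead1 mulr1.
Qed.

End LagrangeInterpolation.

Section ProductOfLinearForms.
Local Open Scope ring_scope.

(* A fixpoint rather than a bigop, which [vm_compute] cannot unfold. *)
Fixpoint sumz_upto (n : nat) (g : nat -> int) : int :=
  if n is n'.+1 then sumz_upto n' g + g n' else 0.

Lemma sumz_uptoE n g : sumz_upto n g = \sum_(i < n) g i.
Proof. by elim: n => [|n IH] /=; rewrite ?big_ord0 // big_ord_recr /= IH. Qed.

Definition incr_at (r : nat -> nat) (i : nat) : nat -> nat :=
  fun k => if k == i then (r k).+1 else r k.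

Definition decr_at (r : nat -> nat) (i : nat) : nat -> nat :=
  fun k => if k == i then (r k).-1 else r k.

(* The coefficient of [\prod_(i < d) 'X_i ^+ r i] in [\prod_(a <- F) \sum_(i < d) a`_i *: 'X_i],
   obtained by expanding the first factor. *)
Fixpoint lin_prod_coef (d : nat) (F : seq (seq int)) (r : nat -> nat) : int :=
  if F is a :: F' then
    sumz_upto d (fun i => if (0 < r i)%N && (a`_i != 0)
                          then a`_i * lin_prod_coef d F' (decr_at r i) else 0)
  else (all (fun i => r i == 0%N) (iota 0 d))%:R.

Lemma eq_lin_prod_coef d F r r' : r =1 r' -> lin_prod_coef d F r = lin_prod_coef d F r'.
Proof.
elim: F r r' => [|a F IH] r r' eq_r /=.
  by rewrite (eq_all (a2 := fun i => r' i == 0%N)) // => i; rewrite eq_r.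
rewrite !sumz_uptoE; apply: eq_bigr => i _; rewrite eq_r; case: ifP => // _.
by congr (_ * _); apply: IH => k; rewrite /decr_at eq_r.
Qed.

Lemma all_iota_eq0 d (r : nat -> nat) :
  all (fun i => r i == 0%N) (iota 0 d) = (\sum_(i < d) r i == 0)%N.
Proof.
rewrite sum_nat_eq0; apply/allP/forallP => [r0 i|r0 i].
  by apply/implyP => _; apply: r0; rewrite mem_iota /=.
by rewrite mem_iota => /= lt_id; apply: (implyP (r0 (Ordinal lt_id))).
Qed.

Lemma sum_incr_at d (r : nat -> nat) (i : 'I_d) :
  (\sum_(k < d) incr_at r i k = (\sum_(k < d) r k).+1)%N.
Proof.
rewrite (bigD1 i) //= [in RHS](bigD1 i) //= /incr_at eqxx addSn; congr (_ + _).+1%N.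
by apply: eq_bigr => k /negPf ki; rewrite -val_eqE /= in ki; rewrite ki.
Qed.

Lemma sum_decr_at d (r : nat -> nat) (i : 'I_d) : (0 < r i)%N ->
  (\sum_(k < d) decr_at r i k).+1 = (\sum_(k < d) r k)%N.
Proof.
move=> ri_gt0; rewrite (bigD1 i) // [RHS](bigD1 i) //= /decr_at eqxx -addSn prednK //.
by congr (_ + _)%N; apply: eq_bigr => k /negPf ki; rewrite -val_eqE /= in ki; rewrite ki.
Qed.

Lemma lin_prod_coef_eq0 d F (r : nat -> nat) :
  (\sum_(i < d) r i != size F)%N -> lin_prod_coef d F r = 0.
Proof.
elim: F r => [|a F IH] r /= sum_r; first by rewrite all_iota_eq0; case: eqP sum_r.
rewrite sumz_uptoE big1 // => i _; case: ifP => // /andP[ri_gt0 _].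
rewrite -(sum_decr_at ri_gt0) eqSS in sum_r.
by rewrite (IH _ sum_r) mulr0.
Qed.

End ProductOfLinearForms.

Section CombinatorialNullstellensatz.
Local Open Scope ring_scope.
Variables (d n : nat) (S : 'I_d -> {set 'I_n}) (t : nat -> nat).
Hypothesis card_S : forall i, #|S i| = (t i).+1.

Definition nat_point (j : 'I_n) : rat := (j : nat)%:R.

Lemma nat_point_inj : injective nat_point.
Proof. by move=> j k /eqP; rewrite eqr_nat => /eqP/val_inj. Qed.

Definition grid_weight (f : {ffun 'I_d -> 'I_n}) : rat :=
  \prod_(i < d) (if f i \in S i then lagrange_weight nat_point (S i) (f i) else 0).

Definition affine_value (c : seq int * int) (f : {ffun 'I_d -> 'I_n}) : rat :=
  \sum_(i < d) (c.1`_i)%:~R * nat_point (f i) - c.2%:~R.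

Definition monomial_value (r : nat -> nat) (f : {ffun 'I_d -> 'I_n}) : rat :=
  \prod_(i < d) nat_point (f i) ^+ r i.

Definition grid_moment (F : seq (seq int * int)) (r : nat -> nat) : rat :=
  \sum_f grid_weight f * \prod_(c <- F) affine_value c f * monomial_value r f.

Lemma monomial_value_incr r (i : 'I_d) f :
  monomial_value (incr_at r i) f = nat_point (f i) * monomial_value r f.
Proof.
rewrite /monomial_value (bigD1 i) // [in RHS](bigD1 i) //= /incr_at eqxx exprS -mulrA.
by congr (_ * (_ * _)); apply: eq_bigr => k /negPf ki; rewrite -val_eqE /= in ki; rewrite ki.
Qed.

Lemma grid_moment_cons c F r : grid_moment (c :: F) r =
  \sum_(i < d) (c.1`_i)%:~R * grid_moment F (incr_at r i) - c.2%:~R * grid_moment F r.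
Proof.
rewrite /grid_moment; under [in RHS]eq_bigr do rewrite mulr_sumr.
rewrite exchange_big /= mulr_sumr -sumrB; apply: eq_bigr => f _.
under [in RHS]eq_bigr do rewrite monomial_value_incr.
rewrite big_cons {1}/affine_value.
set w := grid_weight f; set P := \prod_(_ <- F) _; set m := monomial_value r f.
transitivity (\sum_(i < d) (c.1`_i)%:~R * nat_point (f i) * (w * P * m) - c.2%:~R * (w * P * m)).
  by rewrite -mulr_suml; ring.
by congr (_ - _); apply: eq_bigr => i _; ring.
Qed.

Lemma grid_moment_nil r : grid_moment [::] r =
  \prod_(i < d) \sum_(j in S i) lagrange_weight nat_point (S i) j * nat_point j ^+ r i.
Proof.
rewrite /grid_moment; under [RHS]eq_bigr do rewrite big_mkcond /=.
rewrite bigA_distr_bigA /=; apply: eq_bigr => f _.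
rewrite big_nil mulr1 /grid_weight /monomial_value -big_split /=; apply: eq_bigr => i _.
by case: ifP => _; rewrite ?mul0r.
Qed.

Definition moment_formula (F : seq (seq int * int)) (r : nat -> nat) : rat :=
  if [forall i : 'I_d, r i <= t i]%N
  then (lin_prod_coef d (map fst F) (fun k => t k - r k)%N)%:~R else 0.

Lemma exists_lt_of_sum_le (r : nat -> nat) (i : 'I_d) :
  (\sum_(k < d) r k <= \sum_(k < d) t k)%N -> (t i < r i)%N ->
  exists j : 'I_d, (r j < t j)%N.
Proof.
move=> sum_le lt_i; apply/existsP; apply: contraLR sum_le; rewrite negb_exists => /forallP ge_t.
rewrite -ltnNge (bigD1 i) // [X in (_ < X)%N](bigD1 i) //= -addSn.
by apply: leq_add => //; apply: leq_sum => k _; rewrite leqNgt ge_t.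
Qed.

Lemma grid_moment_nilE (r : nat -> nat) : (\sum_(i < d) r i <= \sum_(i < d) t i)%N ->
  grid_moment [::] r = moment_formula [::] r.
Proof.
move=> sum_le; rewrite grid_moment_nil /moment_formula /= all_iota_eq0.
have lagr (i : 'I_d) : (r i <= t i)%N -> \sum_(j in S i)
    lagrange_weight nat_point (S i) j * nat_point j ^+ r i = (r i == t i)%:R.
  by move=> le_rt; rewrite (sum_lagrange_weight_expr nat_point_inj (card_S i) le_rt).
case: ifP => [/forallP le_rt | /forallPn[i]]; last first.
  rewrite -ltnNge => lt_ti; have [j lt_j] := exists_lt_of_sum_le sum_le lt_ti.
  by rewrite (bigD1 j) //= lagr ?(ltnW lt_j) // ltn_eqF // mul0r.
under eq_bigr do rewrite lagr // eqn_leq le_rt -subn_eq0.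
rewrite sum_nat_eq0.
case: (boolP [forall i : 'I_d, t i - r i == 0]%N) => [/forallP all0 | /forallPn[i ne0]].
  by rewrite big1 // => i _; rewrite all0.
by rewrite (bigD1 i) //= (negPf ne0) mul0r.
Qed.

Lemma grid_moment_consE c F :
  (forall r : nat -> nat, (size F + \sum_(i < d) r i <= \sum_(i < d) t i)%N ->
     grid_moment F r = moment_formula F r) ->
  forall r : nat -> nat, (size (c :: F) + \sum_(i < d) r i <= \sum_(i < d) t i)%N ->
     grid_moment (c :: F) r = moment_formula (c :: F) r.
Proof.
move=> IH r sum_le; rewrite grid_moment_cons IH 1?ltnW //.
under eq_bigr do rewrite IH ?sum_incr_at ?addnS //.
rewrite /moment_formula /=; case: ifP => [/forallP le_rt | /negbT not_le]; last first.
  rewrite mulr0 subr0 big1 // => i _; case: ifP; rewrite ?mulr0 // => /forallP le_incr.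
  by case/forallP: not_le => k; apply: leq_trans (le_incr k); rewrite /incr_at; case: eqP.
rewrite [lin_prod_coef _ _ _]lin_prod_coef_eq0 ?mulr0 ?subr0; last first.
  have sum_t : (\sum_(i < d) (t i - r i + r i) = \sum_(i < d) t i)%N.
    by apply: eq_bigr => i _; rewrite subnK.
  by rewrite size_map gtn_eqF // -(ltn_add2r (\sum_(i < d) r i)) -big_split /= sum_t.
rewrite sumz_uptoE rmorph_sum; apply: eq_bigr => i _.
have -> : [forall k : 'I_d, incr_at r i k <= t k]%N = (r i < t i)%N.
  apply/forallP/idP => [/(_ i)|lt_i k]; first by rewrite /incr_at eqxx.
  by rewrite /incr_at; case: eqP => [/val_inj ->|] //; apply: le_rt.
rewrite subn_gt0; case: ifP => lt_i; last by rewrite mulr0.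
case: eqP => [->|_]; first by rewrite mul0r.
rewrite rmorphM; congr (_ * _%:~R); apply: eq_lin_prod_coef => k.
by rewrite /decr_at /incr_at; case: eqP => // _; rewrite subnS.
Qed.

(* The quantitative Combinatorial Nullstellensatz (Lasoń; Karasev and Petrov). *)
Lemma grid_momentE F (r : nat -> nat) : (size F + \sum_(i < d) r i <= \sum_(i < d) t i)%N ->
  grid_moment F r = moment_formula F r.
Proof.
elim: F r => [|c F IH] r; first exact: grid_moment_nilE.
exact: grid_moment_consE.
Qed.

Theorem combinatorial_nullstellensatz F :
  size F = (\sum_(i < d) t i)%N -> lin_prod_coef d (map fst F) t != 0 ->
  exists2 f : {ffun 'I_d -> 'I_n},
    forall i, f i \in S i & all (fun c => affine_value c f != 0) F.
Proof.
move=> size_F coef_t.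
have moment_nz : grid_moment F (fun=> 0%N) != 0.
  rewrite grid_momentE; last by rewrite big1 // addn0 size_F.
  rewrite /moment_formula; case: forallP => [_|[]//]; rewrite intr_eq0.
  by apply: contra coef_t => /eqP <-; apply/eqP/eq_lin_prod_coef => k; rewrite subn0.
have [f] : exists f,
    grid_weight f * \prod_(c <- F) affine_value c f * monomial_value (fun=> 0%N) f != 0.
  apply/existsP; apply: contraNT moment_nz => /existsPn vanish.
  by apply/eqP/big1 => f _; apply/eqP/negPn/vanish.
rewrite -mulrA !mulf_eq0 !negb_or => /and3P[weight_f prod_f _]; exists f.
  by move=> i; move: weight_f; rewrite /grid_weight (bigD1 i) //= mulf_eq0; case: ifP.
by move: prod_f; rewrite prodf_seq_neq0.
Qed.

End CombinatorialNullstellensatz.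

(** * Colouring the edges of a star *)

Fixpoint ord_pairs (d : nat) : seq (nat * nat) :=
  if d is d'.+1 then ord_pairs d' ++ [seq (i, d') | i <- iota 0 d'] else [::].

Lemma mem_ord_pairs d i j : ((i, j) \in ord_pairs d) = (i < j < d).
Proof.
elim: d => [|d IH] /=; first by rewrite andbF.
rewrite mem_cat IH; apply/idP/idP.
  case/orP => [/andP[-> /ltnW]|/mapP[a]]; first by rewrite ltnS.
  by rewrite mem_iota /= => lt_ad [-> ->]; rewrite lt_ad /=.
case/andP => lt_ij; rewrite ltnS leq_eqVlt => /orP[/eqP eq_jd|->]; last by rewrite lt_ij.
by apply/orP; right; apply/mapP; exists i; rewrite ?mem_iota -?eq_jd.
Qed.

Fixpoint subseqs (T : Type) (s : seq T) : seq (seq T) :=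
  if s is x :: s' then subseqs s' ++ map (cons x) (subseqs s') else [:: [::]].

Lemma filter_in_subseqs (T : eqType) (p : pred T) (s : seq T) : filter p s \in subseqs s.
Proof.
elim: s => [|x s IH] //=; rewrite mem_cat; case: (p x); last by rewrite IH.
by rewrite map_f ?orbT.
Qed.

Definition pair_deg (E : seq (nat * nat)) (k : nat) : nat :=
  count (fun p => (p.1 == k) || (p.2 == k)) E.

Lemma pair_deg_filter d (adj : rel nat) : symmetric adj -> irreflexive adj -> forall i, i < d ->
  pair_deg [seq p <- ord_pairs d | adj p.1 p.2] i = count (adj i) (iota 0 d).
Proof.
move=> adj_sym adj_irr; elim: d => [|d IH] i // lt_id.
rewrite /pair_deg [ord_pairs _]/= filter_cat count_cat -/(pair_deg _ i) count_filter count_map.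
rewrite -addn1 iotaD count_cat /= add0n addn0.
move: lt_id; rewrite ltnS leq_eqVlt => /orP[/eqP ->|lt_id].
  have -> : pair_deg [seq p <- ord_pairs d | adj p.1 p.2] d = 0.
    apply/eqP; rewrite -leqn0 leqNgt -has_count; apply/hasPn => -[a b].
    rewrite mem_filter mem_ord_pairs => /and3P[_ lt_ab lt_bd] /=.
    by rewrite !ltn_eqF ?(ltn_trans lt_ab).
  by rewrite adj_irr addn0; apply: eq_count => a /=; rewrite eqxx orbT adj_sym.
rewrite IH //; congr (_ + _).
rewrite (eq_count (a2 := fun a => (a == i) && adj i d)); last first.
  by move=> a /=; rewrite [d == i]eq_sym (ltn_eqF lt_id) orbF; case: eqP => [->|].
case: (adj i d); last by rewrite (eq_count (a2 := pred0)) ?count_pred0 // => a; rewrite andbF.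
rewrite (eq_count (a2 := pred1 i)) => [|a]; last by rewrite andbT.
by rewrite count_uniq_mem ?iota_uniq // mem_iota /= lt_id.
Qed.

Section StarForms.
Local Open Scope ring_scope.

Definition sum_but_coefs d i : seq int := [seq (k != i : nat)%:Z | k <- iota 0 d].

Definition diff_coefs d (p : nat * nat) : seq int :=
  [seq (k == p.1 : nat)%:Z - (k == p.2 : nat)%:Z | k <- iota 0 d].

(* Colours differing on these pairs of edges at the centre bound every colour class there by
   [uphalf d]. *)
Definition qm_pairs (d : nat) : seq (nat * nat) :=
  match d with 2 | 3 => [:: (0, 1)]%N | 4 => [:: (0, 1); (2, 3)]%N | _ => [::] end.

(* With [y_i] the colour of the edge from the centre to leaf [i] and [s_i] the sum at that leaf
   before recolouring: [y_i - y_j + s_i - s_j] for the edges [(i, j)] in [E] between leaves,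
   [\sum_(k != i) y_k - s_i] comparing the centre with leaf [i] (constant, hence left out, when
   [d = 1]), and [y_i - y_j] on [qm_pairs d]. *)
Definition star_affine_forms d (E : seq (nat * nat)) (s : nat -> nat) : seq (seq int * int) :=
  [seq (sum_but_coefs d i, (s i)%:Z) | i <- if (1 < d)%N then iota 0 d else [::]] ++
  [seq (diff_coefs d p, (s p.2)%:Z - (s p.1)%:Z) | p <- E] ++
  [seq (diff_coefs d p, 0) | p <- qm_pairs d].

Definition star_forms d E : seq (seq int) := map fst (star_affine_forms d E (fun=> 0%N)).

Lemma star_formsE d E s : map fst (star_affine_forms d E s) = star_forms d E.
Proof. by rewrite /star_forms !map_cat -!map_comp. Qed.

End StarForms.

Fixpoint bounded_seqs (n : nat) (b : nat -> nat) : seq (seq nat) :=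
  if n is n'.+1 then [seq rcons ts x | ts <- bounded_seqs n' b, x <- iota 0 (b n').+1]
  else [:: [::]].

(* Short-circuiting [has] and [all], and the [if] below, keep [vm_compute] from evaluating
   every candidate. *)
Fixpoint has_lazy T (p : pred T) (s : seq T) : bool :=
  if s is x :: s' then (if p x then true else has_lazy p s') else false.

Fixpoint all_lazy T (p : pred T) (s : seq T) : bool :=
  if s is x :: s' then (if p x then all_lazy p s' else false) else true.

Lemma has_lazyE T p (s : seq T) : has_lazy p s = has p s.
Proof. by elim: s => //= x s ->; case: (p x). Qed.

Lemma all_lazyE T p (s : seq T) : all_lazy p s = all p s.
Proof. by elim: s => //= x s ->; case: (p x). Qed.

Definition good_star_exponents d E (ts : seq nat) : bool :=
  if [&& size ts == d, all (fun i => nth 0 ts i <= 2 + pair_deg E i) (iota 0 d) &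
         sumn ts == size (star_forms d E)]
  then lin_prod_coef d (star_forms d E) (nth 0 ts) != 0%R else false.

Definition star_forms_certified d : bool :=
  all_lazy (fun E => has_lazy (good_star_exponents d E)
                               (bounded_seqs d (fun i => 2 + pair_deg E i)))
    (subseqs (ord_pairs d)).

Lemma star_forms_certified_upto4 d : 0 < d <= 4 -> star_forms_certified d.
Proof.
case: d => [|[|[|[|[|d]]]]] range; last by case/andP: range.
all: by vm_compute.
Qed.

Section AffineValues.
Local Open Scope ring_scope.
Variables (d n : nat) (f : {ffun 'I_d -> 'I_n}).

Lemma sum_indicator_point (a : 'I_d) :
  \sum_(k < d) ((k == a :> nat) : nat)%:R * nat_point (f k) = nat_point (f a).
Proof.
rewrite (bigD1 a) //= eqxx mul1r big1 ?addr0 // => k.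
by rewrite -val_eqE => /negPf ->; rewrite mul0r.
Qed.

Lemma affine_value_diff (i j : 'I_d) c :
  affine_value (diff_coefs d (i : nat, j : nat), c) f = nat_point (f i) - nat_point (f j) - c%:~R.
Proof.
rewrite /affine_value -!sum_indicator_point -sumrB; congr (_ - _); apply: eq_bigr => k _.
by rewrite (nth_map 0%N) ?size_iota // nth_iota // intrB mulrBl.
Qed.

Lemma affine_value_sum_but (i : 'I_d) c :
  affine_value (sum_but_coefs d i, c) f =
  \sum_(k < d) nat_point (f k) - nat_point (f i) - c%:~R.
Proof.
rewrite /affine_value -sum_indicator_point -sumrB; congr (_ - _); apply: eq_bigr => k _.
rewrite (nth_map 0%N) ?size_iota // nth_iota //.
by case: eqP => _; rewrite ?mul1r ?mul0r ?subr0 ?subrr.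
Qed.

End AffineValues.

Lemma eq_add_le1 (T : eqType) (a b c : T) : b != c -> (b == a) + (c == a) <= 1.
Proof.
move=> neq_bc; case: eqP => [eq_ba|_]; case: eqP => [eq_ca|_] //.
by rewrite eq_ba eq_ca eqxx in neq_bc.
Qed.

Lemma qm_pairs_uphalf (T : eqType) d (y : nat -> T) a : 0 < d <= 4 ->
  (forall p, p \in qm_pairs d -> y p.1 != y p.2) -> \sum_(k < d) (y k == a) <= uphalf d.
Proof.
case: d => [|[|[|[|[|d]]]]] //= _ neq_y; rewrite !big_ord_recr big_ord0 /=.
- by case: (y 0 == a).
- exact: eq_add_le1 (neq_y (0, 1) isT).
- by have := eq_add_le1 a (neq_y (0, 1) isT); case: (y 2 == a) => /=; lia.
- have := eq_add_le1 a (neq_y (0, 1) isT).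
  have := eq_add_le1 a (neq_y (2, 3) isT) => /=; lia.
Qed.

Lemma qm_pairs_lt d p : d <= 4 -> p \in qm_pairs d -> (p.1 < d) && (p.2 < d).
Proof.
case: d => [|[|[|[|[|d]]]]] //= _; rewrite !inE; try by move/eqP ->.
by case/orP => /eqP ->.
Qed.

Section StarColoringIndexed.
Variables (d : nat) (adj : rel nat) (s : nat -> nat) (L : nat -> {set 'I_8}).
Hypothesis d_range : 0 < d <= 4.
Hypothesis adj_sym : symmetric adj.
Hypothesis adj_irr : irreflexive adj.
Hypothesis card_L : forall i, i < d -> 3 + count (adj i) (iota 0 d) <= #|L i|.

Let E := [seq p <- ord_pairs d | adj p.1 p.2].

Lemma star_exponents_exist : exists t : nat -> nat,
  [/\ forall i, i < d -> t i <= 2 + count (adj i) (iota 0 d),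
      \sum_(i < d) t i = size (star_forms d E) &
      lin_prod_coef d (star_forms d E) t != 0%R].
Proof.
have := star_forms_certified_upto4 d_range.
rewrite /star_forms_certified all_lazyE => /allP/(_ E (filter_in_subseqs _ _)).
rewrite has_lazyE => /hasP[ts _]; rewrite /good_star_exponents.
case: ifP => // /and3P[/eqP size_ts /allP le_ts /eqP sum_ts] coef_ts.
exists (nth 0 ts); split => //.
  by move=> i lt_id; rewrite -pair_deg_filter //; apply: le_ts; rewrite mem_iota.
by rewrite -sum_ts sumnE (big_nth 0) big_mkord size_ts.
Qed.

Lemma star_forms_choice : exists2 f : {ffun 'I_d -> 'I_8},
  forall i, f i \in L i & all (fun c => affine_value c f != 0%R) (star_affine_forms d E s).
Proof.
have [t [le_t sum_t coef_t]] := star_exponents_exist.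
pose S (i : 'I_d) : {set 'I_8} := [set x in take (t i).+1 (enum (L i))].
have card_S i : #|S i| = (t i).+1.
  rewrite cardsE (card_uniqP (take_uniq _ (enum_uniq _))) size_takel // -cardE.
  by have := le_t i (ltn_ord i); have := card_L (ltn_ord i); lia.
pose F := star_affine_forms d E s.
have size_F : size F = \sum_(i < d) t i by rewrite -(size_map fst) star_formsE.
have coef_F : lin_prod_coef d (map fst F) t != 0%R by rewrite star_formsE.
have [f f_S f_F] := combinatorial_nullstellensatz card_S size_F coef_F.
by exists f => // i; have := f_S i; rewrite inE => /mem_take; rewrite mem_enum.
Qed.

Lemma star_coloring_indexed : exists y : nat -> 'I_8,
  [/\ forall i, i < d -> y i \in L i,
      forall i j, i < d -> j < d -> adj i j -> s i + y i != s j + y j,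
      1 < d -> forall i, i < d -> \sum_(k < d) y k != s i + y i &
      forall a : nat, \sum_(k < d) (y k == a :> nat) <= uphalf d].
Proof.
have [f f_L f_F] := star_forms_choice.
pose F := star_affine_forms d E s.
pose y k := if insub k is Some i then f i else ord0.
have yE (i : 'I_d) : y i = f i by rewrite /y valK.
have F_nz c : c \in F -> affine_value c f != 0%R by apply: (allP f_F).
have edge_ok i j : i < j -> j < d -> adj i j -> s i + y i != s j + y j.
  move=> lt_ij lt_jd adj_ij; pose i' := Ordinal (ltn_trans lt_ij lt_jd); pose j' := Ordinal lt_jd.
  have /F_nz : (diff_coefs d (i, j), (Posz (s j) - Posz (s i))%R) \in F.
    rewrite mem_cat orbC mem_cat map_f //.
    by rewrite mem_filter /= adj_ij mem_ord_pairs lt_ij.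
  rewrite (affine_value_diff f i' j') /nat_point -(yE i') -(yE j') intrB /= -!pmulrn.
  apply: contra => /eqP/(congr1 (fun m : nat => m%:R : rat)); rewrite !natrD => eq_ij.
  by apply/eqP; lra.
exists y; split.
- by move=> i lt_id; rewrite (yE (Ordinal lt_id)).
- move=> i j lt_id lt_jd adj_ij; case: (ltngtP i j) => [lt_ij|lt_ji|eq_ij].
  + exact: edge_ok.
  + by rewrite eq_sym edge_ok // adj_sym.
  + by rewrite eq_ij adj_irr in adj_ij.
- move=> lt_1d i lt_id; pose i' := Ordinal lt_id.
  have /F_nz : (sum_but_coefs d i, Posz (s i)) \in F by rewrite mem_cat map_f // lt_1d mem_iota.
  rewrite (affine_value_sum_but f i') /nat_point -(yE i') /= -pmulrn.
  under eq_bigr do rewrite -yE.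
  apply: contra => /eqP/(congr1 (fun m : nat => m%:R : rat)); rewrite natrD natr_sum => eq_i.
  by apply/eqP; lra.
- move=> a; apply: (qm_pairs_uphalf (y := fun k => val (y k))) => // -[i j] qm_ij.
  have /andP[lt_id lt_jd] := qm_pairs_lt (proj2 (andP d_range)) qm_ij.
  have /F_nz : (diff_coefs d (i, j), 0%R) \in F by rewrite !mem_cat map_f ?orbT.
  rewrite (affine_value_diff f (Ordinal lt_id) (Ordinal lt_jd)) subr0 subr_eq0.
  by rewrite /nat_point eqr_nat -!yE.
Qed.

End StarColoringIndexed.

Lemma count_iota0_sum (p : pred nat) d : count p (iota 0 d) = \sum_(k < d) p k.
Proof.
elim: d => [|d IH]; first by rewrite big_ord0.
by rewrite big_ord_recr -IH -[X in iota 0 X]addn1 iotaD count_cat /= addn0.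
Qed.

Lemma cards_in_sum (I : finType) (N : {set I}) (P : pred I) :
  #|[set u in N | P u]| = \sum_(u in N) P u.
Proof.
rewrite -sum1_card big_mkcond [RHS]big_mkcond /=; apply: eq_bigr => u _.
by rewrite inE; case: (u \in N); case: (P u).
Qed.

Lemma sum_set_nth (I : finType) (N : {set I}) u0 (F : I -> nat) :
  \sum_(u in N) F u = \sum_(k < #|N|) F (nth u0 (enum N) k).
Proof. by rewrite -big_enum (big_nth u0) big_mkord cardE. Qed.

Section StarColoring.
Variables (I : finType) (N : {set I}) (adj : rel I) (s : I -> nat) (L : I -> {set 'I_8}).
Hypothesis N_range : 0 < #|N| <= 4.
Hypothesis adj_sym : symmetric adj.
Hypothesis adj_irr : irreflexive adj.
Hypothesis card_L : forall u, u \in N -> 3 + #|[set w in N | adj u w]| <= #|L u|.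

Lemma star_coloring : exists y : I -> 'I_8,
  [/\ forall u, u \in N -> y u \in L u,
      forall u w, u \in N -> w \in N -> adj u w -> s u + y u != s w + y w,
      1 < #|N| -> forall u, u \in N -> \sum_(w in N) y w != s u + y u &
      forall a : nat, #|[set u in N | y u == a :> nat]| <= uphalf #|N|].
Proof.
have [u0 u0N] : {u0 | u0 \in N} by apply/sigW/set0Pn; rewrite -card_gt0; case/andP: N_range.
pose g k := nth u0 (enum N) k.
have inN_g u : u \in N -> exists2 k, k < #|N| & u = g k.
  by exists (index u (enum N)); rewrite /g ?nth_index ?cardE ?index_mem ?mem_enum.
have index_g k : k < #|N| -> index (g k) (enum N) = k.
  by move=> lt_k; rewrite index_uniq ?enum_uniq -?cardE.
have sumN (F : I -> nat) : \sum_(u in N) F u = \sum_(k < #|N|) F (g k) := sum_set_nth N u0 F.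
have [|||y' [y'_L y'_adj y'_sum y'_qm]] :=
  @star_coloring_indexed #|N| (fun i j => adj (g i) (g j)) (s \o g) (L \o g) N_range.
- by move=> i j; rewrite adj_sym.
- by move=> i; rewrite adj_irr.
- move=> i lt_i; rewrite count_iota0_sum -(sumN (adj (g i))) -cards_in_sum.
  by apply: card_L; rewrite -mem_enum mem_nth -?cardE.
pose y u := y' (index u (enum N)).
have yg k : k < #|N| -> y (g k) = y' k by move=> lt_k; rewrite /y index_g.
exists y; split.
- by move=> u /inN_g[k lt_k ->]; rewrite yg //; apply: y'_L.
- move=> u w /inN_g[i lt_i ->] /inN_g[j lt_j ->] adj_ij.
  by rewrite !yg //; apply: y'_adj.
- move=> lt_1N u /inN_g[i lt_i ->]; rewrite sumN yg //.
  by under eq_bigr => k _ do rewrite yg //; apply: y'_sum.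
- by move=> a; rewrite cards_in_sum sumN; under eq_bigr => k _ do rewrite yg //; apply: y'_qm.
Qed.

End StarColoring.

(** * Recolouring the star of a vertex *)

Definition isolate (T : finType) (e : rel T) (v : T) : rel T :=
  [rel a b | [&& e a b, a != v & b != v]].

Definition nsd_but_K2 (T : finType) (e : rel T) (c : T -> T -> nat) : Prop :=
  forall a b, e a b -> ~~ ((deg e a == 1) && (deg e b == 1)) -> sigma_c e c a != sigma_c e c b.

Definition qm_nsd_but_K2 (T : finType) (e : rel T) (k : nat) (c : T -> T -> nat) : Prop :=
  [/\ is_k_edge_coloring e k c, quasi_majority e c & nsd_but_K2 e c].

Lemma uphalf_le_double n : n <= uphalf n + uphalf n.
Proof. by rewrite uphalf_half -{1}(odd_double_half n) -addnn; case: (odd n) => /=; lia. Qed.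

Lemma leq_uphalf m n : m <= n -> uphalf m <= uphalf n.
Proof. by rewrite !uphalf_half; lia. Qed.

Section StarRecolor.
Variables (T : finType) (e : rel T) (v : T).
Hypotheses (e_sym : symmetric e) (e_irr : irreflexive e).

Local Notation e' := (isolate e v).
Local Notation N := (nbhd e v).

Lemma simple_isolate : simple_graph e'.
Proof.
split=> [a b|a]; rewrite /isolate /= ?e_irr //.
by rewrite /= e_sym; case: (a == v); case: (b == v); rewrite ?andbF ?andbT.
Qed.

Lemma nbhd_isolate_sub u : nbhd e' u \subset nbhd e u.
Proof. by apply/subsetP => w; rewrite !inE => /andP[]. Qed.

Lemma mem_nbhd_sym u w : (w \in nbhd e u) = (u \in nbhd e w).
Proof. by rewrite !inE e_sym. Qed.

Lemma nbhd_neq u : u \in N -> u != v.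
Proof. by apply: contraTneq => ->; rewrite inE e_irr. Qed.

Lemma deg_isolate_in u : u \in N -> deg e u = (deg e' u).+1.
Proof.
move=> uN; rewrite /deg (cardsD1 v) mem_nbhd_sym uN add1n; congr _.+1; apply: eq_card => w.
by rewrite !inE /isolate /= (nbhd_neq uN) andbC.
Qed.

Lemma nbhd_isolate_out u : u != v -> u \notin N -> nbhd e' u = nbhd e u.
Proof.
move=> uv uN; apply/setP => w; rewrite !inE /isolate /= uv.
by case: (eqVneq w v) => [->|]; rewrite ?andbT // andbF e_sym -[e v u]inE (negPf uN).
Qed.

Lemma max_degree_isolate D : max_degree_le e D -> max_degree_le e' D.
Proof.
by move=> max_deg u; apply: leq_trans (max_deg u); apply/subset_leq_card/nbhd_isolate_sub.
Qed.

Lemma card_arcs_isolate : 0 < deg e v ->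
  #|[set p : T * T | e' p.1 p.2]| < #|[set p : T * T | e p.1 p.2]|.
Proof.
rewrite card_gt0 => /set0Pn[u]; rewrite inE => e_vu.
apply/proper_card/properP; split; first by apply/subsetP => p; rewrite !inE => /andP[].
by exists (v, u); rewrite !inE /isolate //= eqxx andbF.
Qed.

Variable c' : T -> T -> nat.
Hypothesis c'_col : is_k_edge_coloring e' 7 c'.
Hypothesis c'_qm : quasi_majority e' c'.

Local Notation sigma' := (sigma_c e' c').

Definition outer_nbhd u : {set T} := [set w | e u w & (w != v) && (w \notin N)].

Definition clash_colors u : {set 'I_8} :=
  [set inord (sigma' w - sigma' u) | w in outer_nbhd u].

Definition full_colors u : {set 'I_8} :=
  [set a : 'I_8 | uphalf (deg e u) <= #|[set w | e' u w & c' u w == a]|].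

Definition free_colors u : {set 'I_8} := ~: (clash_colors u :|: full_colors u :|: [set ord0]).

Lemma card_full_colors u : u \in N -> #|full_colors u| <= 1.
Proof.
move=> uN; apply/card_le1P => a; rewrite inE => full_a b; rewrite inE.
apply/idP/eqP => [full_b|-> //]; apply/eqP; apply: contraTT full_b => neq_ab.
set A := [set w | _ & c' u w == a] in full_a *; set B := [set w | _ & c' u w == b].
have disjAB : [disjoint A & B].
  apply/pred0P => w; rewrite !inE; apply/negP => /andP[/andP[_ /eqP ->] /andP[_ /eqP/val_inj]].
  by move=> eq_ab; rewrite eq_ab eqxx in neq_ab.
have : #|A :|: B| <= deg e' u.
  by apply: subset_leq_card; apply/subsetP => w; rewrite !inE => /orP[]/andP[].
rewrite cardsU (disjoint_setI0 disjAB) cards0 subn0 -ltnNge.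
move: full_a; have := uphalf_le_double (deg e u); rewrite deg_isolate_in //; lia.
Qed.

Lemma deg_outer_nbhd u : u \in N -> deg e u = #|outer_nbhd u| + #|[set w in N | e u w]| + 1.
Proof.
move=> uN; rewrite /deg (cardsD1 v) mem_nbhd_sym uN addnC; congr (_ + 1).
have -> : nbhd e u :\ v = outer_nbhd u :|: [set w in N | e u w].
  apply/setP => w; rewrite !inE; case: (eqVneq w v) => [->|_]; first by rewrite e_irr !andbF.
  by case: (e v w); case: (e u w).
rewrite cardsU; have -> : outer_nbhd u :&: [set w in N | e u w] = set0.
  by apply/setP => w; rewrite !inE; case: (e v w); rewrite ?andbF.
by rewrite cards0 subn0.
Qed.

Lemma card_free_colors u : max_degree_le e 4 -> u \in N ->
  3 + #|[set w in N | e u w]| <= #|free_colors u|.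
Proof.
move=> max_deg uN; have := cardsC (clash_colors u :|: full_colors u :|: [set ord0]).
have := cardsU (clash_colors u :|: full_colors u) [set ord0].
have := cardsU (clash_colors u) (full_colors u).
have : #|clash_colors u| <= #|outer_nbhd u| by apply: leq_imset_card.
have := card_full_colors uN; have := deg_outer_nbhd uN; have := max_deg u.
rewrite cards1 card_ord /free_colors; lia.
Qed.

Hypothesis c'_nsd : nsd_but_K2 e' c'.
Variable y : T -> 'I_8.
Hypothesis y_free : forall u, u \in N -> y u \in free_colors u.
Hypothesis y_adj : forall u w, u \in N -> w \in N -> e u w -> sigma' u + y u != sigma' w + y w.
Hypothesis y_sum : 1 < #|N| -> forall u, u \in N -> \sum_(w in N) y w != sigma' u + y u.
Hypothesis y_qm : forall a : nat, #|[set u in N | y u == a :> nat]| <= uphalf #|N|.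

Definition star_recolor (a b : T) : nat :=
  if a == v then val (y b) else if b == v then val (y a) else c' a b.

Local Notation c := star_recolor.

Lemma free_colorsP u : u \in N ->
  [/\ y u != ord0, y u \notin clash_colors u & y u \notin full_colors u].
Proof. by move/y_free; rewrite !inE !negb_or => /andP[/andP[-> ->] ->]. Qed.

Lemma star_recolor_col : is_k_edge_coloring e 7 c.
Proof.
have y_range u : u \in N -> 1 <= y u <= 7.
  by case/free_colorsP => y_nz _ _; have := ltn_ord (y u); move: y_nz; rewrite -val_eqE /=; lia.
move=> a b e_ab; rewrite /star_recolor.
case: (eqVneq a v) => [eq_av | av]; first subst a.
  have bN : b \in N by rewrite inE.
  by rewrite (negPf (nbhd_neq bN)) y_range.
case: (eqVneq b v) => [eq_bv | bv]; first subst b.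
  by rewrite y_range // mem_nbhd_sym inE.
by apply: c'_col; rewrite /isolate /= e_ab av bv.
Qed.

Lemma sigma_star_recolor_out w : w != v -> w \notin N -> sigma_c e c w = sigma' w.
Proof.
move=> wv wN; rewrite /sigma_c (nbhd_isolate_out wv wN); apply: eq_bigr => u.
rewrite inE /star_recolor (negPf wv) => e_wu.
by case: (eqVneq u v) => // eq_uv; rewrite -mem_nbhd_sym inE -eq_uv e_wu in wN.
Qed.

Lemma sigma_star_recolor_in u : u \in N -> sigma_c e c u = sigma' u + y u.
Proof.
move=> uN; have uv := nbhd_neq uN.
rewrite /sigma_c (bigD1 v) /=; last by rewrite mem_nbhd_sym.
rewrite {1}/star_recolor (negPf uv) eqxx addnC; congr (_ + _).
apply: eq_big => [w|w]; first by rewrite !inE /isolate /= uv.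
by rewrite !inE => /andP[_ wv]; rewrite /star_recolor (negPf uv) (negPf wv).
Qed.

Lemma sigma_star_recolor_center : sigma_c e c v = \sum_(u in N) y u.
Proof. by apply: eq_bigr => u _; rewrite /star_recolor eqxx. Qed.

Lemma star_recolor_qm : quasi_majority e c.
Proof.
move=> w a; case: (eqVneq w v) => [-> | wv].
  apply: leq_trans (y_qm a); apply/subset_leq_card/subsetP => u.
  by rewrite !inE /star_recolor eqxx.
have colors_w : [set u | e w u & c w u == a] :\ v = [set u | e' w u & c' w u == a].
  apply/setP => u; rewrite !inE /isolate /= wv /star_recolor (negPf wv).
  by case: (eqVneq u v) => _ /=; rewrite ?andbF ?andbT.
have e_wv : e w v = (w \in N) by rewrite inE e_sym.
rewrite (cardsD1 v) colors_w !inE /star_recolor eqxx (negPf wv) e_wv.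
have [wN | wN] := boolP (w \in N); last first.
  by rewrite /deg -(nbhd_isolate_out wv wN) add0n c'_qm.
have [_ _] := free_colorsP wN; rewrite inE -ltnNge deg_isolate_in //.
case: eqP => [<- | _] lt_full; first by rewrite add1n.
by rewrite add0n (leq_trans (c'_qm w a)) // leq_uphalf.
Qed.

Lemma sigma_isolate_gt0 u : 0 < deg e' u -> 0 < sigma' u.
Proof.
rewrite card_gt0 => /set0Pn[w uw]; rewrite /sigma_c (bigD1 w) //=.
rewrite inE in uw; have [_ /andP[pos _]] := c'_col uw.
exact: leq_trans pos (leq_addr _ _).
Qed.

Lemma star_recolor_nsd_center b : b \in N -> ~~ ((deg e v == 1) && (deg e b == 1)) ->
  sigma_c e c v != sigma_c e c b.
Proof.
move=> bN not_K2; rewrite sigma_star_recolor_center sigma_star_recolor_in //.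
have [lt_1N | le_N1] := ltnP 1 #|N|; first exact: y_sum.
have N1 : #|N| = 1 by apply/anti_leq; rewrite le_N1 card_gt0; apply/set0Pn; exists b.
have sigma_b : 0 < sigma' b.
  have deg_v : deg e v = 1 := N1.
  by apply: sigma_isolate_gt0; move: not_K2; rewrite deg_v deg_isolate_in // lt0n.
have N_b : N = [set b] by apply/eqP; rewrite eq_sym eqEcard sub1set bN cards1 N1.
by rewrite N_b big_set1; move: sigma_b; lia.
Qed.

Lemma star_recolor_nsd_in_out a b : a \in N -> b != v -> b \notin N -> e a b ->
  sigma_c e c a != sigma_c e c b.
Proof.
move=> aN bv bN e_ab; rewrite sigma_star_recolor_in // sigma_star_recolor_out //.
have [_ not_clash _] := free_colorsP aN; apply: contraNneq not_clash => eq_sigma.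
apply/imsetP; exists b; first by rewrite inE e_ab bv bN.
by apply: val_inj; rewrite /= inordK; have := ltn_ord (y a); lia.
Qed.

Lemma star_recolor_nsd : nsd_but_K2 e c.
Proof.
move=> a b e_ab not_K2.
case: (eqVneq a v) => [eq_av | av]; first by subst a; apply: star_recolor_nsd_center; rewrite ?inE.
case: (eqVneq b v) => [eq_bv | bv].
  subst b; rewrite eq_sym; apply: star_recolor_nsd_center; last by rewrite andbC.
  by rewrite mem_nbhd_sym inE.
have [aN | aN] := boolP (a \in N); have [bN | bN] := boolP (b \in N).
- by rewrite !sigma_star_recolor_in // y_adj.
- exact: star_recolor_nsd_in_out.
- by rewrite eq_sym star_recolor_nsd_in_out // e_sym.
- rewrite !sigma_star_recolor_out //; apply: c'_nsd; first by rewrite /isolate /= e_ab av bv.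
  by rewrite /deg !nbhd_isolate_out.
Qed.

End StarRecolor.

Lemma isolate_extension (T : finType) (e : rel T) (v : T) (c' : T -> T -> nat) :
  simple_graph e -> max_degree_le e 4 -> 0 < deg e v ->
  qm_nsd_but_K2 (isolate e v) 7 c' -> exists c, qm_nsd_but_K2 e 7 c.
Proof.
move=> [e_sym e_irr] max_deg deg_v [c'_col c'_qm c'_nsd].
have [||||y [y_free y_adj y_sum y_qm]] :=
  @star_coloring _ (nbhd e v) e (sigma_c (isolate e v) c') (free_colors e v c').
- by rewrite deg_v max_deg.
- exact: e_sym.
- exact: e_irr.
- by move=> u uN; apply: card_free_colors.
exists (star_recolor v c' y); split.
- exact: star_recolor_col.
- exact: star_recolor_qm.
- exact: star_recolor_nsd.
Qed.

Lemma qm_nsd_but_K2_edgeless (T : finType) (e : rel T) k (c : T -> T -> nat) :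
  (forall a b, ~~ e a b) -> qm_nsd_but_K2 e k c.
Proof.
move=> no_edge; split=> [a b|a i|a b]; rewrite ?(negPf (no_edge a b)) //.
suff -> : [set u | e a u & c a u == i] = set0 by rewrite cards0.
by apply/setP => b; rewrite !inE (negPf (no_edge a b)).
Qed.

Lemma qm_nsd_but_K2_exists (T : finType) (e : rel T) :
  simple_graph e -> max_degree_le e 4 -> exists c, qm_nsd_but_K2 e 7 c.
Proof.
have [n] := ubnP #|[set p : T * T | e p.1 p.2]|.
elim: n e => // n IH e lt_arcs simple_e max_deg.
case: (pickP (fun v => 0 < deg e v)) => [v deg_v | edgeless]; last first.
  exists (fun _ _ => 1); apply: qm_nsd_but_K2_edgeless => a b; apply/negP => e_ab.
  by have := edgeless a; rewrite /= card_gt0; case/set0Pn; exists b; rewrite inE.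
have [e_sym e_irr] := simple_e.
have [|c' good'] :=
  IH (isolate e v) _ (simple_isolate v e_sym e_irr) (max_degree_isolate v max_deg).
  exact: leq_trans (card_arcs_isolate deg_v) lt_arcs.
exact: isolate_extension good'.
Qed.

Theorem mainTheorem3 (T : finType) (e : rel T) :
  simple_graph e -> nice e -> max_degree_le e 4 -> qm_nsd_colorable e 7.
Proof.
move=> simple_e nice_e max_deg.
have [c [col qm nsd]] := qm_nsd_but_K2_exists simple_e max_deg.
exists c; split=> // a b e_ab; apply/eqP/nsd => //.
by apply/negP => /andP[/eqP deg_a /eqP deg_b]; apply: (nice_e a b e_ab).
Qed.
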